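(* Let $\rho=(\frac12,\ldots,\frac12)\in\mathbb{R}^6$ and let $P_{\rm ext}$ be the convex hull of the vectors $e_j$ and $\rho-2e_j$ ($0\le j\le5$). Inside the affine subspace $\{\alpha\in\mathbb{R}^6:2\rho\cdot\alpha=1\}$, the bounding inequalities of $P_{\rm ext}$ are \[\alpha_r+\alpha_s\le1,\qquad 0\le r<s\le5;\] that is, $P_{\rm ext}$ is the set of $\alpha$ with $\sum_r\alpha_r=1$ satisfying these inequalities, and each is facet-defining.
   Context: $e_0,\ldots,e_5$ is the standard basis of $\mathbb{R}^6$. *)

From HB Require Import structures.
From mathcomp Require Import all_boot all_order all_algebra.
From mathcomp Require Import reals.
Set Implicit Arguments. Unset Strict Implicit. Unset Printing Implicit Defensive.
Import Order.TTheory GRing.Theory Num.Theory.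
Local Open Scope ring_scope.

Section Defs.
Variable R : realType.

Definition dotv n (a b : 'rV[R]_n) : R := \sum_(i < n) a 0 i * b 0 i.

Definition ev n (j : 'I_n) : 'rV[R]_n := delta_mx 0 j.

Definition rho : 'rV[R]_6 := const_mx (2^-1).

Definition convex_hull n (I : finType) (v : I -> 'rV[R]_n) (x : 'rV[R]_n) : Prop :=
  exists l : I -> R, (forall i, 0 <= l i) /\ \sum_i l i = 1 /\ x = \sum_i l i *: v i.

Definition Pext_gen (s : 'I_6 + 'I_6) : 'rV[R]_6 :=
  match s with inl j => ev j | inr j => rho - 2%:R *: ev j end.

Definition Pext : 'rV[R]_6 -> Prop := convex_hull Pext_gen.

Definition aff_indep n k (p : 'I_k.+1 -> 'rV[R]_n) : bool :=
  row_free (\matrix_(i < k) (p (lift ord0 i) - p ord0)).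

Definition affdim n (S : 'rV[R]_n -> Prop) (d : nat) : Prop :=
  (exists p : 'I_d.+1 -> 'rV[R]_n, (forall i, S (p i)) /\ aff_indep p) /\
  (forall p : 'I_d.+2 -> 'rV[R]_n, (forall i, S (p i)) -> ~~ aff_indep p).

Definition facet_defining n (S : 'rV[R]_n -> Prop) (f : 'rV[R]_n -> R) (b : R) : Prop :=
  (forall x, S x -> f x <= b) /\
  exists d, affdim S d.+1 /\ affdim (fun x => S x /\ f x = b) d.

End Defs.

From HB Require Import structures.
From mathcomp Require Import all_boot all_order all_algebra.
From mathcomp Require Import reals.
From mathcomp Require Import ring lra.
Set Implicit Arguments. Unset Strict Implicit. Unset Printing Implicit Defensive.
Import Order.TTheory GRing.Theory Num.Theory.
Local Open Scope ring_scope.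

(* A convex combination with weights a_j on e_j and mu_j on rho - 2 e_j has
   coordinates a_j + (sum mu)/2 - 2 mu_j and coordinate sum 1, and by
   nonnegativity of the weights x_r + x_s <= sum a + sum mu = 1.
   Conversely, given x with sum 1 and all x_r + x_s <= 1, at most one
   coordinate x_k exceeds 1/2; then x = (2 x_k - 1) e_k + sum mu_j (rho - 2 e_j)
   with mu_j = (1 - x_k - x_j)/2 for j <> k and mu_k = 0, and if no coordinate
   exceeds 1/2 then x = sum (1/4 - x_j/2) (rho - 2 e_j).
   For the dimensions: the points e_c and rho - 2 e_t (t <> c) are affinely
   independent; six of them lie in P_ext, and e_r with the four rho - 2 e_t
   (t <> r, s) lie on the face x_r + x_s = 1.  No more independent points fit,
   because the linear map x |-> (sum x, x_r + x_s) of rank 2 (resp. sum x of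
   rank 1) is constant on the face (resp. on P_ext). *)

Lemma sum_mul_eq_nat (V : pzSemiRingType) n (f : 'I_n -> V) (j : 'I_n) :
  \sum_i f i * (i == j)%:R = f j.
Proof.
rewrite (bigD1 j) //= eqxx mulr1 big1 ?addr0 // => i /negbTE ->.
by rewrite mulr0.
Qed.

Lemma addr_le_sum (V : numDomainType) n (a : 'I_n -> V) (r s : 'I_n) :
  (forall i, 0 <= a i) -> r != s -> a r + a s <= \sum_i a i.
Proof.
move=> a_ge0 rs; rewrite (bigD1 r) //= (bigD1 s) 1?eq_sym //= addrA lerDl.
exact: sumr_ge0.
Qed.

Lemma row_mul_const1 (V : pzSemiRingType) n (x : 'rV[V]_n) :
  x *m const_mx 1 = const_mx (\sum_j x 0 j) :> 'M[V]_1.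
Proof.
apply/matrixP => i j; rewrite !mxE (ord1 i).
by apply: eq_bigr => l _; rewrite mxE mulr1.
Qed.

Lemma rank_const1 (F : fieldType) n : \rank (const_mx 1 : 'M[F]_(n.+1, 1)) = 1%N.
Proof.
apply/eqP; rewrite eqn_leq rank_leq_col lt0n mxrank_eq0.
by apply/eqP => /matrixP /(_ ord0 ord0) /eqP; rewrite !mxE oner_eq0.
Qed.

Lemma not_aff_indep_of_const_image (R : realType) n k q
    (p : 'I_k.+1 -> 'rV[R]_n) (B : 'M[R]_(n, q)) :
  (forall i, p i *m B = p ord0 *m B) -> (n < \rank B + k)%N -> ~~ aff_indep p.
Proof.
move=> pB lt_n; apply/negP => /eqP rk.
have AB : (\matrix_(i < k) (p (lift ord0 i) - p ord0)) *m B = 0.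
  by apply/row_matrixP => i; rewrite row_mul rowK row0 mulmxBl pB subrr.
by have := mulmx0_rank_max AB; rewrite rk addnC leqNgt lt_n.
Qed.

Section PairSum.
Variables (F : fieldType) (n : nat) (r s : 'I_n).

Definition sum_pair_mx : 'M[F]_(n, 2) :=
  \matrix_(l, j) if j == ord0 then 1 else (l == r)%:R + (l == s)%:R.

Lemma mul_sum_pair_mx (x : 'rV[F]_n) :
  x *m sum_pair_mx = \row_(j < 2) if j == ord0 then \sum_l x 0 l else x 0 r + x 0 s.
Proof.
apply/rowP => j; rewrite !mxE; have [->|j_neq0] := eqVneq j ord0.
  by apply: eq_bigr => l _; rewrite mxE mulr1.
under eq_bigr do rewrite mxE (negbTE j_neq0) mulrDr.
by rewrite big_split /= !sum_mul_eq_nat.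
Qed.

Lemma rank_sum_pair_mx (t : 'I_n) :
  r != s -> t != r -> t != s -> \rank sum_pair_mx = 2%N.
Proof.
move=> rs tr ts; apply/eqP; rewrite eqn_leq rank_leq_col -mxrank_tr.
suff /eqP -> : row_free sum_pair_mx^T by [].
apply: inj_row_free => v /rowP v0.
have E u : v 0 ord0 + v 0 (lift ord0 ord0) * ((u == r)%:R + (u == s)%:R) = 0.
  by move: (v0 u); rewrite !mxE !big_ord_recl big_ord0 !mxE /= addr0 mulr1.
have := E t; rewrite (negbTE tr) (negbTE ts) addr0 mulr0 addr0 => v_0.
have := E r; rewrite eqxx (negbTE rs) v_0 add0r addr0 mulr1 => v_1.
by apply/rowP => j; rewrite mxE; case: (unliftP ord0 j) => [j'|] ->; rewrite ?(ord1 j').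
Qed.

End PairSum.

Section Pext.
Variable R : realType.

Lemma ev_entry (i j : 'I_6) : ev R i 0 j = (i == j)%:R.
Proof. by rewrite /ev mxE eqxx /= eq_sym. Qed.

Lemma Pext_gen_entry (s : 'I_6 + 'I_6) (j : 'I_6) :
  Pext_gen R s 0 j = match s with inl i => (i == j)%:R
                       | inr i => 2^-1 - 2 * (i == j)%:R end.
Proof. by case: s => i /=; rewrite ?ev_entry // !mxE eqxx eq_sym. Qed.

Lemma comb_Pext_gen_entry (l : 'I_6 + 'I_6 -> R) (j : 'I_6) :
  (\sum_s l s *: Pext_gen R s) 0 j =
  l (inl j) + (\sum_i l (inr i)) / 2 - 2 * l (inr j).
Proof.
rewrite summxE big_sumType /=.
under eq_bigr do rewrite mxE ev_entry.
under [X in _ + X]eq_bigr do rewrite !mxE eqxx /= eq_sym mulr_natl mulrBr.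
rewrite sum_mul_eq_nat sumrB.
under [X in _ - X]eq_bigr do rewrite mulrnAr.
by rewrite sumrMnl sum_mul_eq_nat -mulr_suml addrA mulr_natl.
Qed.

Lemma dotv_2rho (x : 'rV[R]_6) : dotv (2%:R *: rho R) x = \sum_j x 0 j.
Proof. by apply: eq_bigr => i _; rewrite !mxE mulfV ?mul1r ?pnatr_eq0. Qed.

Lemma Pext_gen_in s : Pext (Pext_gen R s).
Proof.
exists (fun t => (t == s)%:R); split; first by move=> t; rewrite ler0n.
by split; rewrite (bigD1 s) //= eqxx ?scale1r big1 ?addr0 // => t /negbTE ->;
  rewrite ?scale0r.
Qed.

Lemma Pext_coord_sum (x : 'rV[R]_6) : Pext x -> \sum_j x 0 j = 1.
Proof.
case=> l [_ [l1 ->]]; move: l1; rewrite big_sumType /= => l1.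
under eq_bigr do rewrite comb_Pext_gen_entry.
rewrite sumrB big_split /= sumr_const card_ord -mulr_sumr.
rewrite -[in X in _ = X]l1 -mulr_natr; lra.
Qed.

Lemma Pext_pair_le1 (x : 'rV[R]_6) (r s : 'I_6) :
  Pext x -> r != s -> x 0 r + x 0 s <= 1.
Proof.
case=> l [l_ge0 [l1 ->]] rs; move: l1; rewrite big_sumType /= => l1.
rewrite !comb_Pext_gen_entry.
have := @addr_le_sum _ _ (fun i => l (inl i)) r s (fun i => l_ge0 _) rs.
have := l_ge0 (inr r); have := l_ge0 (inr s); lra.
Qed.

Lemma Pext_of_weights (x : 'rV[R]_6) (a mu : 'I_6 -> R) :
  (forall i, 0 <= a i) -> (forall i, 0 <= mu i) ->
  \sum_i a i + \sum_i mu i = 1 ->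
  (forall j, x 0 j = a j + (\sum_i mu i) / 2 - 2 * mu j) -> Pext x.
Proof.
move=> a_ge0 mu_ge0 sum1 xE.
exists (fun s => match s with inl i => a i | inr i => mu i end).
split; first by case.
split; first by rewrite big_sumType.
by apply/rowP => j; rewrite comb_Pext_gen_entry xE.
Qed.

Lemma Pext_of_pair_le1 (x : 'rV[R]_6) : \sum_j x 0 j = 1 ->
  (forall r s : 'I_6, r != s -> x 0 r + x 0 s <= 1) -> Pext x.
Proof.
move=> x1 x_le1.
have [/existsP [k xk]|] := boolP [exists k, 2^-1 < x 0 k].
  set m := x 0 k in xk.
  pose mu i := (1 - m - x 0 i + (2 * m - 1) * (i == k)%:R) / 2.
  have mu_sum : \sum_i mu i = 2 - 2 * m.
    rewrite -mulr_suml !big_split /= !sumrN !sumr_const card_ord x1.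
    by rewrite (sum_mul_eq_nat (fun=> 2 * m - 1)); field.
  apply: (@Pext_of_weights _ (fun i => (2 * m - 1) * (i == k)%:R) mu).
  - by move=> i; apply: mulr_ge0; rewrite ?ler0n //; lra.
  - move=> i; rewrite /mu; have [->|ik] := eqVneq i k.
      by rewrite mulr1 /m; lra.
    by have := x_le1 i k ik; rewrite mulr0 addr0 -/m; lra.
  - by rewrite mu_sum (sum_mul_eq_nat (fun=> 2 * m - 1)); ring.
  - by move=> j; rewrite mu_sum /mu /m; field.
rewrite negb_exists => /forallP x_le_half.
pose mu i := 4^-1 - 2^-1 * x 0 i.
have mu_sum : \sum_i mu i = 1.
  by rewrite sumrB sumr_const card_ord -mulr_sumr x1 -mulr_natr; field.
apply: (@Pext_of_weights _ (fun=> 0) mu) => //.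
- by move=> i; have := x_le_half i; rewrite -leNgt /mu; lra.
- by rewrite big1 ?add0r.
- by move=> j; rewrite mu_sum /mu; field.
Qed.

Lemma Pext_iff (x : 'rV[R]_6) : Pext x <->
  dotv (2%:R *: rho R) x = 1 /\
  forall r s : 'I_6, (r < s)%N -> x 0 r + x 0 s <= 1.
Proof.
rewrite dotv_2rho; split.
  move=> Px; split; first exact: Pext_coord_sum.
  by move=> r s rs; apply: Pext_pair_le1 => //; rewrite neq_ltn rs.
case=> x1 x_le1; apply: Pext_of_pair_le1 => // r s; rewrite neq_ltn.
by case/orP => [/x_le1 //|/x_le1]; rewrite addrC.
Qed.

Definition apex_pts m (c : 'I_6) (g : 'I_m -> 'I_6) (i : 'I_m.+1) : 'rV[R]_6 :=
  match unlift ord0 i with None => ev R c | Some j => Pext_gen R (inr (g j)) end.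

Lemma apex_pts_in m c (g : 'I_m -> 'I_6) i :
  apex_pts c g i = Pext_gen R (inl c) \/ exists j, apex_pts c g i = Pext_gen R (inr (g j)).
Proof. by rewrite /apex_pts; case: (unlift ord0 i) => [j|]; [right; exists j|left]. Qed.

Lemma aff_indep_apex_pts m c (g : 'I_m -> 'I_6) :
  injective g -> (forall i, g i != c) -> aff_indep (apex_pts c g).
Proof.
move=> g_inj g_neq_c; apply: inj_row_free => v /rowP v0.
have E t : \sum_j v 0 j * (2^-1 - 2 * (g j == t)%:R - (c == t)%:R) = 0.
  have := v0 t; rewrite !mxE => v0t; rewrite -[RHS]v0t; apply: eq_bigr => j _.
  by rewrite !mxE /apex_pts liftK unlift_none Pext_gen_entry ev_entry.
have v_sum : \sum_j v 0 j = 0.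
  move: (E c); rewrite eqxx.
  under eq_bigr do rewrite (negbTE (g_neq_c _)) mulr0 subr0.
  by rewrite -mulr_suml => /eqP; rewrite mulf_eq0 => /orP [/eqP //|/eqP /=]; lra.
apply/rowP => i; rewrite mxE.
move: (E (g i)); rewrite [c == _]eq_sym (negbTE (g_neq_c i)).
under eq_bigr do rewrite subr0 mulrBr (inj_eq g_inj) mulrCA.
rewrite sumrB -mulr_suml v_sum mul0r sub0r -mulr_sumr sum_mul_eq_nat.
by move/eqP; rewrite oppr_eq0 mulf_eq0 => /orP [/eqP|/eqP //]; lra.
Qed.

Lemma affdim_Pext : affdim (@Pext R) 5.
Proof.
split.
  exists (apex_pts ord0 (lift ord0)); split.
    by move=> i; case: (apex_pts_in ord0 (lift ord0) i) => [->|[j ->]]; apply: Pext_gen_in.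
  by apply: aff_indep_apex_pts; [exact: lift_inj | move=> i; rewrite eq_sym neq_lift].
move=> p Pp; apply: (@not_aff_indep_of_const_image _ _ _ _ p (const_mx 1 : 'M_(6, 1))).
  by move=> i; rewrite !row_mul_const1 !Pext_coord_sum.
by rewrite rank_const1.
Qed.

Lemma affdim_Pext_pair_face (r s : 'I_6) : r != s ->
  affdim (fun x : 'rV[R]_6 => Pext x /\ x 0 r + x 0 s = 1) 4.
Proof.
move=> rs; case: (unliftP r s) => [u s_def|s_r]; last by rewrite s_r eqxx in rs.
pose g (i : 'I_4) : 'I_6 := lift r (lift u i).
have g_inj : injective g by move=> i j /lift_inj /lift_inj.
have g_neq_r i : g i != r by rewrite eq_sym neq_lift.
have g_neq_s i : g i != s by rewrite s_def (inj_eq (@lift_inj _ r)) eq_sym neq_lift.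
split.
  exists (apex_pts r g); split; last exact: aff_indep_apex_pts.
  move=> i; case: (apex_pts_in r g i) => [->|[j ->]]; split; try exact: Pext_gen_in.
    by rewrite !Pext_gen_entry eqxx (negbTE rs) addr0.
  by rewrite !Pext_gen_entry (negbTE (g_neq_r j)) (negbTE (g_neq_s j)) mulr0 subr0; field.
move=> p Pp; apply: (@not_aff_indep_of_const_image _ _ _ _ p (sum_pair_mx R r s)).
  move=> i; rewrite !mul_sum_pair_mx.
  by case: (Pp i) => /Pext_coord_sum -> ->; case: (Pp ord0) => /Pext_coord_sum -> ->.
by rewrite (@rank_sum_pair_mx R 6 r s _ rs (g_neq_r ord0) (g_neq_s ord0)).
Qed.

End Pext.

Theorem proposition8p2 (R : realType) :
  (forall x : 'rV[R]_6,
     Pext x <->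
     (dotv (2%:R *: rho R) x = 1 /\
      forall r s : 'I_6, (r < s)%N -> x 0 r + x 0 s <= 1)) /\
  (forall r s : 'I_6, (r < s)%N ->
     facet_defining (@Pext R) (fun x => x 0 r + x 0 s) 1).
Proof.
split=> [x|r s lt_rs]; first exact: Pext_iff.
have rs : r != s by rewrite neq_ltn lt_rs.
split=> [x Px|]; first exact: Pext_pair_le1.
by exists 4%N; split; [exact: affdim_Pext | exact: affdim_Pext_pair_face].
Qed.
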